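(* For $n=1,2,\dots$ let $\varphi_*^{(n)}(x):=\varphi^{(n)}(x)-\frac12$, $x\in[0,1]$, and let $E[X]:=\int_0^1X(x)\,dx$. Then for any positive integers $i<j$, $$E\big[(\varphi_*^{(i)})^2(\varphi_*^{(j)})^2\big]-E\big[(\varphi_*^{(i)})^2\big]E\big[(\varphi_*^{(j)})^2\big]=\frac1{180}\cdot\frac1{4^{j-i}}.$$
   Context: The tent map on $[0,1]$ is $\varphi(x)=2x$ for $x\in[0,1/2]$ and $\varphi(x)=2(1-x)$ for $x\in[1/2,1]$; it is extended to $\mathbb{R}$ by $\varphi(x):=\varphi(x-[x])$, and $\varphi^{(n)}$ denotes the $n$-fold iterate of $\varphi$, so that $\varphi^{(n)}(x)=\varphi(2^{n-1}x)$. *)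

From Stdlib Require Import Reals.
From Coquelicot Require Import Coquelicot.
Open Scope R_scope.

Definition tent01 (y : R) : R := if Rle_dec y (1/2) then 2 * y else 2 * (1 - y).
Definition tent (x : R) : R := tent01 (x - IZR (Int_part x)).

Definition tent_iter (n : nat) (x : R) : R := Nat.iter n tent x.

Definition tent_star (n : nat) (x : R) : R := tent_iter n x - 1/2.

Definition Ex (X : R -> R) : R := RInt X 0 1.

From Stdlib Require Import Reals Lra Lia.
From Coquelicot Require Import Coquelicot.
Open Scope R_scope.

(* On [0,1] the tent map is t(x) = 1 - |2x - 1|, whose transfer operator is
   (L F)(y) = (F(y/2) + F(1 - y/2))/2, i.e. int F (G o t) = int (L F) G.
   Since L 1 = 1, Lebesgue measure is t-invariant, so
   E[(phi_*^(i))^2 (phi_*^(j))^2] = int q (q o t^(j-i)) with q(y) = (y - 1/2)^2.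
   The three-dimensional space spanned by q, y - 1/2 and 1 is L-invariant, and L
   multiplies the q-coordinate by 1/4; iterating j - i times reduces everything
   to int q^2 = 1/80 and int q = 1/12. *)

Definition tent_abs (x : R) : R := 1 - Rabs (2 * x - 1).

Definition sq_dev (y : R) : R := (y - 1/2) ^ 2.

Definition transfer_op (F : R -> R) (y : R) : R := (F (y / 2) + F (1 - y / 2)) / 2.

Definition quad (a b c y : R) : R := a * sq_dev y + b * (y - 1/2) + c.

Lemma continuous_Rmult_fun (f g : R -> R) (x : R) :
  continuous f x -> continuous g x -> continuous (fun y => f y * g y) x.
Proof. intros Hf Hg. exact (continuous_mult (K := R_AbsRing) f g x Hf Hg). Qed.

Lemma continuous_affine (u v x : R) : continuous (fun y => u * y + v) x.
Proof. apply (ex_derive_continuous (V := R_NormedModule)). auto_derive. exact I. Qed.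

Lemma continuous_tent_abs (x : R) : continuous tent_abs x.
Proof.
  apply (continuous_comp (fun y => 2 * y - 1) (fun z => 1 - Rabs z)).
  - apply (ex_derive_continuous (V := R_NormedModule)). auto_derive. exact I.
  - apply (continuous_minus (V := R_NormedModule)).
    + apply continuous_const.
    + apply continuous_Rabs.
Qed.

Lemma continuous_tent_abs_iter (n : nat) (x : R) : continuous (Nat.iter n tent_abs) x.
Proof.
  revert x; induction n as [|n IH]; intro x; simpl.
  - apply continuous_id.
  - apply (continuous_comp (Nat.iter n tent_abs) tent_abs); auto.
    apply continuous_tent_abs.
Qed.

Lemma continuous_quad (a b c x : R) : continuous (quad a b c) x.
Proof. apply (ex_derive_continuous (V := R_NormedModule)). unfold quad, sq_dev. auto_derive. exact I. Qed.

Lemma continuous_sq_dev_iter (n : nat) (x : R) :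
  continuous (fun y => sq_dev (Nat.iter n tent_abs y)) x.
Proof.
  apply (continuous_comp (Nat.iter n tent_abs) sq_dev).
  - apply continuous_tent_abs_iter.
  - apply (ex_derive_continuous (V := R_NormedModule)). unfold sq_dev. auto_derive. exact I.
Qed.

Lemma ex_RInt_of_continuous (f : R -> R) (a b : R) :
  (forall x, continuous f x) -> ex_RInt f a b.
Proof. intro Hf. apply (ex_RInt_continuous (V := R_CompleteNormedModule)); auto. Qed.

Lemma RInt_comp_affine (K : R -> R) (u v a b : R) : (forall x, continuous K x) ->
  u * RInt (fun y => K (u * y + v)) a b = RInt K (u * a + v) (u * b + v).
Proof.
  intro HK.
  rewrite <- (RInt_comp_lin (V := R_CompleteNormedModule)) by (apply ex_RInt_of_continuous; auto).
  symmetry. apply (RInt_scal (V := R_CompleteNormedModule)).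
  apply ex_RInt_of_continuous. intro x.
  apply (continuous_comp (fun y => u * y + v) K); auto using continuous_affine.
Qed.

Section Transfer.

Variables F G : R -> R.
Hypothesis HF : forall x, continuous F x.
Hypothesis HG : forall x, continuous G x.

Lemma continuous_mul_comp_tent_abs (x : R) : continuous (fun y => F y * G (tent_abs y)) x.
Proof.
  apply continuous_Rmult_fun; auto.
  apply (continuous_comp tent_abs G); auto using continuous_tent_abs.
Qed.

Lemma continuous_comp_mul (f : R -> R) (x : R) :
  ex_derive f x -> continuous (fun y => F (f y) * G y) x.
Proof.
  intro Hf. apply continuous_Rmult_fun; auto.
  apply (continuous_comp f F); auto.
  apply (ex_derive_continuous (V := R_NormedModule)), Hf.
Qed.

Lemma RInt_mul_comp_tent_abs_left :
  RInt (fun y => F (y / 2) * G y) 0 1 = 2 * RInt (fun x => F x * G (tent_abs x)) 0 (1/2).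
Proof.
  replace 1 with (2 * (1/2) + 0) at 1 by field. replace 0 with (2 * 0 + 0) at 1 by ring.
  rewrite <- RInt_comp_affine
    by (intro; apply continuous_comp_mul; auto_derive; exact I).
  f_equal. apply RInt_ext. intros x Hx. rewrite Rmin_left, Rmax_right in Hx by lra.
  unfold tent_abs. rewrite Rabs_left by lra. f_equal; f_equal; field.
Qed.

Lemma RInt_mul_comp_tent_abs_right :
  RInt (fun y => F (1 - y / 2) * G y) 0 1 = 2 * RInt (fun x => F x * G (tent_abs x)) (1/2) 1.
Proof.
  rewrite <- opp_RInt_swap
    by (apply ex_RInt_of_continuous; intro; apply continuous_comp_mul; auto_derive; exact I).
  replace 1 with (-2 * (1/2) + 2) at 1 by field. replace 0 with (-2 * 1 + 2) at 1 by ring.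
  rewrite <- RInt_comp_affine
    by (intro; apply continuous_comp_mul; auto_derive; exact I).
  rewrite (RInt_ext _ (fun x => F x * G (tent_abs x))); [unfold opp; simpl; ring |].
  intros x Hx. rewrite Rmin_left, Rmax_right in Hx by lra.
  unfold tent_abs. rewrite Rabs_right by lra. f_equal; f_equal; field.
Qed.

Lemma RInt_mul_comp_tent_abs :
  RInt (fun x => F x * G (tent_abs x)) 0 1 = RInt (fun y => transfer_op F y * G y) 0 1.
Proof.
  assert (ex_half : forall f : R -> R, (forall x, ex_derive f x) ->
    ex_RInt (fun y => scal (/2) (F (f y) * G y)) 0 1).
  { intros f Hf. apply ex_RInt_of_continuous. intro.
    apply continuous_Rmult_fun; auto using continuous_const, continuous_comp_mul. }
  rewrite (RInt_ext (fun y => transfer_op F y * G y)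
             (fun y => plus (scal (/2) (F (y / 2) * G y)) (scal (/2) (F (1 - y / 2) * G y))))
    by (intros; unfold transfer_op, plus, scal; simpl; unfold mult; simpl; field).
  rewrite (RInt_plus (V := R_CompleteNormedModule))
    by (apply ex_half; intro; auto_derive; exact I).
  rewrite !(RInt_scal (V := R_CompleteNormedModule))
    by (apply ex_RInt_of_continuous; intro; apply continuous_comp_mul; auto_derive; exact I).
  rewrite RInt_mul_comp_tent_abs_left, RInt_mul_comp_tent_abs_right.
  rewrite <- (RInt_Chasles (V := R_CompleteNormedModule) _ 0 (1/2) 1)
    by (apply ex_RInt_of_continuous, continuous_mul_comp_tent_abs).
  unfold plus, scal; simpl; unfold mult; simpl. field.
Qed.

End Transfer.

Lemma RInt_comp_tent_abs_iter (n : nat) (G : R -> R) : (forall x, continuous G x) ->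
  RInt (fun x => G (Nat.iter n tent_abs x)) 0 1 = RInt G 0 1.
Proof.
  revert G; induction n as [|n IH]; intros G HG; [reflexivity |].
  rewrite <- (IH G HG).
  rewrite (RInt_ext _ (fun x => 1 * G (Nat.iter n tent_abs (tent_abs x))))
    by (intros; rewrite <- Nat.iter_succ_r; simpl; ring).
  rewrite (RInt_mul_comp_tent_abs (fun _ => 1) (fun y => G (Nat.iter n tent_abs y))).
  - apply RInt_ext. intros. unfold transfer_op.
    replace ((1 + 1) / 2) with 1 by field. apply Rmult_1_l.
  - intro. apply continuous_const.
  - intro. apply (continuous_comp (Nat.iter n tent_abs) G); auto.
    apply continuous_tent_abs_iter.
Qed.

Lemma transfer_op_quad (a b c y : R) :
  transfer_op (quad a b c) y = quad (a / 4) (- a / 4) (a / 16 + c) y.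
Proof. unfold transfer_op, quad, sq_dev. field. Qed.

Lemma RInt_quad_mul_sq_dev (a b c : R) :
  RInt (fun y => quad a b c y * sq_dev y) 0 1 = a / 80 + c / 12.
Proof.
  set (P := fun y => a * (y - 1/2) ^ 5 / 5 + b * (y - 1/2) ^ 4 / 4 + c * (y - 1/2) ^ 3 / 3).
  assert (HP : is_RInt (fun y => quad a b c y * sq_dev y) 0 1 (minus (P 1) (P 0))).
  { apply (is_RInt_derive (V := R_CompleteNormedModule)).
    - intros x _. unfold P, quad, sq_dev. auto_derive; [exact I | field].
    - intros x _. apply (ex_derive_continuous (V := R_NormedModule)).
      unfold quad, sq_dev. auto_derive. exact I. }
  rewrite (is_RInt_unique _ _ _ _ HP). unfold P, minus, plus, opp; simpl. field.
Qed.

Lemma RInt_quad_mul_sq_dev_iter (k : nat) (a b c : R) :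
  RInt (fun y => quad a b c y * sq_dev (Nat.iter k tent_abs y)) 0 1
  = a * (1/144 + / 4 ^ k / 180) + c / 12.
Proof.
  revert a b c; induction k as [|k IH]; intros a b c.
  - simpl. rewrite RInt_quad_mul_sq_dev. field.
  - rewrite (RInt_ext _ (fun y => quad a b c y * sq_dev (Nat.iter k tent_abs (tent_abs y))))
      by (intros; rewrite <- Nat.iter_succ_r; reflexivity).
    rewrite (RInt_mul_comp_tent_abs (quad a b c) (fun y => sq_dev (Nat.iter k tent_abs y)))
      by auto using continuous_quad, continuous_sq_dev_iter.
    rewrite (RInt_ext _ (fun y => quad (a / 4) (- a / 4) (a / 16 + c) y
                                  * sq_dev (Nat.iter k tent_abs y)))
      by (intros; rewrite transfer_op_quad; reflexivity).
    rewrite IH. simpl. field. apply pow_nonzero. lra.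
Qed.

Lemma tent01_eq_tent_abs (y : R) : tent01 y = tent_abs y.
Proof.
  unfold tent01, tent_abs. destruct (Rle_dec y (1/2)).
  - rewrite Rabs_left1; lra.
  - rewrite Rabs_right; lra.
Qed.

Lemma tent_eq_tent_abs (x : R) : 0 <= x <= 1 -> tent x = tent_abs x.
Proof.
  intro Hx. unfold tent. rewrite tent01_eq_tent_abs.
  destruct (base_Int_part x) as [Hlo Hhi].
  destruct (Req_dec x 1) as [->|Hne].
  - assert (Int_part 1 < 2)%Z by (apply lt_IZR; simpl; lra).
    assert (0 < Int_part 1)%Z by (apply lt_IZR; simpl; lra).
    replace (Int_part 1) with 1%Z by lia.
    unfold tent_abs. simpl. rewrite Rabs_left, Rabs_right; lra.
  - assert (Int_part x < 1)%Z by (apply lt_IZR; simpl; lra).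
    assert (-1 < Int_part x)%Z by (apply lt_IZR; simpl; lra).
    replace (Int_part x) with 0%Z by lia.
    f_equal. simpl. ring.
Qed.

Lemma tent_abs_range (x : R) : 0 <= x <= 1 -> 0 <= tent_abs x <= 1.
Proof.
  intro Hx. unfold tent_abs. destruct (Rle_dec 0 (2 * x - 1)).
  - rewrite Rabs_right; lra.
  - rewrite Rabs_left; lra.
Qed.

Lemma tent_abs_iter_range (n : nat) (x : R) :
  0 <= x <= 1 -> 0 <= Nat.iter n tent_abs x <= 1.
Proof. intro Hx. induction n as [|n IH]; simpl; auto using tent_abs_range. Qed.

Lemma tent_iter_eq (n : nat) (x : R) : 0 <= x <= 1 -> tent_iter n x = Nat.iter n tent_abs x.
Proof.
  intro Hx. induction n as [|n IH]; [reflexivity |].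
  unfold tent_iter in *. simpl. rewrite IH.
  apply tent_eq_tent_abs, tent_abs_iter_range, Hx.
Qed.

Lemma tent_star_sq (n : nat) (x : R) :
  0 <= x <= 1 -> tent_star n x ^ 2 = sq_dev (Nat.iter n tent_abs x).
Proof. intro Hx. unfold tent_star, sq_dev. rewrite tent_iter_eq by exact Hx. reflexivity. Qed.

Lemma Ex_tent_star_sq (n : nat) : Ex (fun x => tent_star n x ^ 2) = 1/12.
Proof.
  unfold Ex.
  rewrite (RInt_ext _ (fun x => sq_dev (Nat.iter n tent_abs x))).
  2:{ intros x Hx. rewrite Rmin_left, Rmax_right in Hx by lra.
      apply tent_star_sq. lra. }
  rewrite (RInt_comp_tent_abs_iter n sq_dev)
    by (intro; exact (continuous_sq_dev_iter 0 _)).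
  rewrite (RInt_ext _ (fun y => quad 0 0 1 y * sq_dev y))
    by (intros; cbn; unfold quad; ring).
  rewrite RInt_quad_mul_sq_dev. field.
Qed.

Lemma Ex_tent_star_sq_mul (i j : nat) : (i <= j)%nat ->
  Ex (fun x => tent_star i x ^ 2 * tent_star j x ^ 2) = 1/144 + / 4 ^ (j - i) / 180.
Proof.
  intro Hij. unfold Ex.
  set (k := (j - i)%nat). replace j with (k + i)%nat by lia.
  pose (G := fun u => quad 1 0 0 u * sq_dev (Nat.iter k tent_abs u)).
  rewrite (RInt_ext _ (fun x => G (Nat.iter i tent_abs x))).
  2:{ intros x Hx. rewrite Rmin_left, Rmax_right in Hx by lra.
      rewrite !tent_star_sq by lra. rewrite Nat.iter_add.
      cbn. unfold G, quad, sq_dev. ring. }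
  rewrite (RInt_comp_tent_abs_iter i G)
    by (intro; apply continuous_Rmult_fun; auto using continuous_quad, continuous_sq_dev_iter).
  unfold G. rewrite RInt_quad_mul_sq_dev_iter. field. apply pow_nonzero. lra.
Qed.

Theorem lemma2p6 (i j : nat) (hi : (1 <= i)%nat) (hij : (i < j)%nat) :
  Ex (fun x => (tent_star i x)^2 * (tent_star j x)^2)
  - Ex (fun x => (tent_star i x)^2) * Ex (fun x => (tent_star j x)^2)
  = 1/180 * / 4 ^ (j - i).
Proof.
  rewrite Ex_tent_star_sq_mul by lia.
  rewrite !Ex_tent_star_sq.
  field. apply pow_nonzero. lra.
Qed.
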